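(* Let $k\ge 2$ and let $L$ be a subspace of $\bigwedge^{k}V$ such that $e_{1}\wedge e_{2}\wedge\bigwedge^{k-2}V\subseteq L$ and $e_1\wedge e_2\wedge x=0$ for all $x\in L$. If $N_{j\to i}L=L$ for all $i<j$ with $i,j\geq3$, then $L$ has a basis $B$ such that for every $b\in B$ and every $j\geq3$, either $b\in\bigwedge^kV^{(j)}$ or $b\in e_j\wedge\bigwedge^{k-1}V^{(j)}$ (i.e. the basis is monomial with respect to every $e_j$ with $j\ge3$).
   Context: $\mathbb{F}$ is a field (assumed throughout the paper, for expository purposes, to have characteristic not $2$), $V$ is an $n$-dimensional $\mathbb{F}$-vector space with a fixed basis $e_1,\dots,e_n$, and $\bigwedge V$ its exterior algebra. For $j\in[n]$, $V^{(j)}$ is the span of $\{e_h:h\neq j\}$, and $\bigwedge V^{(j)}$ is viewed as a subalgebra of $\bigwedge V$. Slow shift: for distinct $i,j\in[n]$ and nonzero $m\in\bigwedge^kV$, write uniquely $m=x+e_j\wedge y$ with $x\in\bigwedge^kV^{(j)}$, $y\in\bigwedge^{k-1}V^{(j)}$, and set $N_{j\to i}m=x+e_i\wedge y$ if this is nonzero, and $N_{j\to i}m=e_j\wedge y$ otherwise (the limit as $t\to0$ of the projective action of the linear map $e_j\mapsto e_i+te_j$ fixing the other $e_h$). For a subspace $L$ of $\bigwedge^kV$, $N_{j\to i}L$ is the span of $\{N_{j\to i}m:m\in L\setminus\{0\}\}$. *)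

(* Concrete model of the exterior algebra of V = F^n with
   basis e_0, ..., e_(n-1) (0-based: the paper's e_1 is index 0). *)
From HB Require Import structures.
From mathcomp Require Import all_boot all_order all_algebra.
Set Implicit Arguments. Unset Strict Implicit. Unset Printing Implicit Defensive.
Import Order.TTheory GRing.Theory Num.Theory.
Local Open Scope ring_scope.

(* Elements of /\V: coordinates on the basis e_S = e_(s1) /\ ... /\ e_(sr),
   S = {s1 < ... < sr} a subset of [n]. *)
Notation ext F n := {ffun {set 'I_n} -> F^o}.

Section Exterior.
Variables (F : fieldType) (n : nat).

Definition eS (S : {set 'I_n}) : ext F n := [ffun T => (T == S)%:R].

Definition ev (j : 'I_n) : ext F n := eS [set j].

(* e_S /\ e_T = wsign S T * e_(S u T): zero if S, T meet, otherwise the sign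
   of the permutation sorting the concatenation, i.e. (-1)^(#inversions). *)
Definition wsign (S T : {set 'I_n}) : F :=
  if [disjoint S & T] then
    (-1) ^+ #|[set p : 'I_n * 'I_n | (p.1 \in S) && (p.2 \in T) && (p.2 < p.1)%N]|
  else 0.

Definition wedge (f g : ext F n) : ext F n :=
  \sum_(S : {set 'I_n}) \sum_(T : {set 'I_n}) (f S * g T * wsign S T) *: eS (S :|: T).

Definition extk (k : nat) : {vspace ext F n} :=
  <<[seq eS A | A <- enum [set A : {set 'I_n} | #|A| == k]]>>%VS.

Definition extk_without (j : 'I_n) (k : nat) : {vspace ext F n} :=
  <<[seq eS A | A <- enum [set A : {set 'I_n} | (#|A| == k) && (j \notin A)]]>>%VS.

(* the unique decomposition m = x + e_j /\ y with x, y in /\V^(j) *)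
Definition xpart (j : 'I_n) (m : ext F n) : ext F n :=
  [ffun S : {set 'I_n} => if j \in S then 0 else m S].
Definition ypart (j : 'I_n) (m : ext F n) : ext F n :=
  [ffun S : {set 'I_n} => if j \in S then 0
             else wedge (ev j) (eS S) (j |: S) * m (j |: S)].

Definition slow_shift (j i : 'I_n) (m : ext F n) : ext F n :=
  let z := xpart j m + wedge (ev i) (ypart j m) in
  if z != 0 then z else wedge (ev j) (ypart j m).

Definition in_shift_span (j i : 'I_n) (L : {vspace ext F n}) (v : ext F n) : Prop :=
  exists s : seq (ext F n),
    all (fun m => (m \in L) && (m != 0)) s /\ v \in <<map (slow_shift j i) s>>%VS.

Definition shift_stable (j i : 'I_n) (L : {vspace ext F n}) : Prop :=
  forall v : ext F n, in_shift_span j i L v <-> v \in L.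

End Exterior.

Arguments eS {F n}.
Arguments ev {F n}.
Arguments wsign {F n}.
Arguments wedge {F n}.
Arguments extk F n k.
Arguments extk_without F {n}.
Arguments xpart {F n}.
Arguments ypart {F n}.
Arguments slow_shift {F n}.
Arguments in_shift_span {F n}.
Arguments shift_stable {F n}.

(* Indices are 1-based here, as in the paper. Say that L is closed under a
   predicate P on index sets when the coordinate projection keeping exactly the
   e_S with P S maps L into itself; closedness is preserved under boolean
   combinations of predicates. For j >= 4, closedness under [j \in S] follows from
   N_{j->3} L = L: every N_{j->3} m is either x + e_3 /\ y, none of whose
   coordinates contains j, or e_j /\ y, all of whose coordinates do, and these
   vectors span L. For j = 3 no shift is available; instead the hypotheses on
   e_1 /\ e_2 show that [3 \notin S] is, on the coordinates of elements of L, a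
   closed condition (see [proj_closed_third]). Once L is closed for all j >= 3,
   projecting a basis of L onto the classes {S | S :&: {3..n} = Q} and extracting
   a basis from the result gives the required basis. *)

From HB Require Import structures.
From mathcomp Require Import all_boot all_order all_algebra.
From mathcomp Require Import zify.
Import Order.TTheory GRing.Theory Num.Theory.
Local Open Scope ring_scope.

Set Implicit Arguments. Unset Strict Implicit. Unset Printing Implicit Defensive.

Section Coordinates.
Variables (F : fieldType) (n : nat).
Local Notation E := (ext F n).
Implicit Types (A S T U : {set 'I_n}) (f g m v : E).

Lemma scale_regularE (a b : F) : a *: (b : F^o) = a * b.
Proof. by []. Qed.

Lemma eSE A S : eS A S = (S == A)%:R :> F.
Proof. by rewrite ffunE. Qed.

Lemma ext_expand v : v = \sum_S v S *: eS S.
Proof.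
apply/ffunP => U; rewrite sum_ffunE (bigD1 U) //= big1 => [|S hS].
  by rewrite ffunE eSE eqxx scale_regularE mulr1 addr0.
by rewrite ffunE eSE scale_regularE eq_sym (negbTE hS) mulr0.
Qed.

Lemma wedgeZl (c : F) f g : wedge (c *: f) g = c *: wedge f g.
Proof.
rewrite /wedge scaler_sumr; apply: eq_bigr => S _; rewrite scaler_sumr.
by apply: eq_bigr => T _; rewrite ffunE scalerA !mulrA.
Qed.

Lemma wedge_eSl A g U :
  wedge (eS A) g U = \sum_T g T * wsign A T * (A :|: T == U)%:R.
Proof.
rewrite /wedge sum_ffunE (bigD1 A) //= [X in _ + X]big1 ?addr0 => [|S hS].
  rewrite sum_ffunE; apply: eq_bigr => T _.
  by rewrite ffunE eSE eqxx mul1r eSE scale_regularE eq_sym.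
by rewrite sum_ffunE big1 // => T _; rewrite ffunE eSE (negbTE hS) !mul0r scale0r.
Qed.

Lemma wedge_eS_eq0 A g U :
  (forall T, g T != 0 -> A :|: T != U) -> wedge (eS A) g U = 0.
Proof.
move=> hU; rewrite wedge_eSl big1 // => T _.
have [->|/hU /negbTE ->] := eqVneq (g T) 0; by rewrite ?mul0r ?mulr0.
Qed.

Lemma wedge_eS_eS A B : wedge (eS A) (eS B) = wsign A B *: (eS (A :|: B) : E).
Proof.
apply/ffunP => U; rewrite wedge_eSl (bigD1 B) //= [X in _ + X]big1 ?addr0 => [|T hT].
  by rewrite eSE eqxx mul1r !ffunE scale_regularE eq_sym.
by rewrite eSE (negbTE hT) !mul0r.
Qed.

Lemma wsign_sqr A T : [disjoint A & T] -> wsign A T ^+ 2 = 1 :> F.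
Proof. by move=> dAT; rewrite /wsign dAT sqrr_sign. Qed.

Lemma wsign_neq0 A T : [disjoint A & T] -> wsign A T != 0 :> F.
Proof. by move=> dAT; rewrite /wsign dAT signr_eq0. Qed.

Lemma setU_disjointK A S : [disjoint A & S] -> (A :|: S) :\: A = S.
Proof.
by move=> dAS; rewrite setDUl setDv set0U; apply/setDidPl; rewrite disjoint_sym.
Qed.

Lemma wedge_eS_setU A g S :
  [disjoint A & S] -> wedge (eS A) g (A :|: S) = wsign A S * g S.
Proof.
move=> dAS; rewrite wedge_eSl (bigD1 S) //= eqxx mulr1 mulrC big1 ?addr0 // => T hT.
have [dAT|] := boolP [disjoint A & T]; last first.
  by rewrite /wsign => /negbTE ->; rewrite mulr0 mul0r.
case: eqP => [eAT|]; last by rewrite mulr0.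
by move: hT; rewrite -(setU_disjointK dAT) eAT setU_disjointK ?eqxx.
Qed.

Lemma mem_span_eS (P : pred {set 'I_n}) v :
  reflect (forall S, ~~ P S -> v S = 0)
          (v \in <<[seq eS A | A <- enum [set A | P A]]>>%VS).
Proof.
apply: (iffP idP) => [hv S hS | h0].
  rewrite (coord_span hv) sum_ffunE big1 // => i _; rewrite ffunE.
  set X := map_tuple _ _; have /mapP [A] : X`_i \in X by rewrite mem_nth ?size_tuple.
  rewrite mem_enum inE => hA ->.
  by rewrite eSE; case: eqP => [eSA|_]; [rewrite eSA hA in hS | rewrite scale_regularE mulr0].
rewrite (ext_expand v) rpred_sum // => S _.
case hS: (P S); last by rewrite h0 ?hS // scale0r rpred0.
by rewrite rpredZ // memv_span // map_f // mem_enum inE.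
Qed.

End Coordinates.

Section CoordProjection.
Variables (F : fieldType) (n : nat).
Local Notation E := (ext F n).
Implicit Types (P : pred {set 'I_n}) (m v : E) (L : {vspace E}).

Definition coord_proj P m : E := [ffun S => if P S then m S else 0].

Fact coord_proj_is_linear P : linear (coord_proj P).
Proof.
move=> a u v; apply/ffunP => S; rewrite !ffunE.
by case: (P S); rewrite ?scale_regularE ?mulr0 ?addr0.
Qed.

HB.instance Definition _ P := GRing.isSemilinear.Build F E E _ (coord_proj P)
  (GRing.semilinear_linear (coord_proj_is_linear P)).

Lemma eq_coord_proj P1 P2 : P1 =1 P2 -> coord_proj P1 =1 coord_proj P2.
Proof. by move=> eP m; apply/ffunP => S; rewrite !ffunE eP. Qed.

Definition proj_closed L P := forall m, m \in L -> coord_proj P m \in L.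

Lemma eq_proj_closed L P1 P2 : P1 =1 P2 -> proj_closed L P1 -> proj_closed L P2.
Proof. by move=> eP clP m mL; rewrite -(eq_coord_proj eP) clP. Qed.

Lemma proj_closedT L : proj_closed L predT.
Proof. by move=> m; congr (_ \in L); apply/ffunP => S; rewrite ffunE. Qed.

Lemma proj_closedC L P : proj_closed L P -> proj_closed L (fun S => ~~ P S).
Proof.
move=> clP m mL; have -> : coord_proj (fun S => ~~ P S) m = m - coord_proj P m.
  by apply/ffunP => S; rewrite !ffunE; case: (P S); rewrite ?subrr ?subr0.
by rewrite rpredB ?clP.
Qed.

Lemma proj_closedI L P1 P2 :
  proj_closed L P1 -> proj_closed L P2 -> proj_closed L (fun S => P1 S && P2 S).
Proof.
move=> cl1 cl2 m mL.
have -> : coord_proj (fun S => P1 S && P2 S) m = coord_proj P1 (coord_proj P2 m).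
  by apply/ffunP => S; rewrite !ffunE; case: (P1 S); case: (P2 S).
by rewrite cl1 ?cl2.
Qed.

Lemma proj_closed_all L (I : eqType) (s : seq I) (Ps : I -> pred {set 'I_n}) :
  (forall i, i \in s -> proj_closed L (Ps i)) ->
  proj_closed L (fun S => all (fun i => Ps i S) s).
Proof.
elim: s => [_|i s IHs cls] /=; first exact: proj_closedT.
apply: proj_closedI; first by apply: cls; rewrite mem_head.
by apply: IHs => j js; apply: cls; rewrite inE js orbT.
Qed.

Lemma proj_closed_span L P (X : seq E) :
  (forall w, w \in X -> coord_proj P w \in L) ->
  forall v, v \in <<X>>%VS -> coord_proj P v \in L.
Proof.
move=> XL v vX; rewrite (coord_span (X := in_tuple X) vX) linear_sum.
rewrite rpred_sum // => i _.
by rewrite linearZ rpredZ // XL // mem_nth.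
Qed.

Lemma proj_closed_mem_eq L j b :
  proj_closed L (fun S => j \in S) -> proj_closed L (fun S => (j \in S) == b).
Proof.
case: b => clj; first by apply: eq_proj_closed clj => S; rewrite eqb_id.
by apply: eq_proj_closed (proj_closedC clj) => S; rewrite eqbF_neg.
Qed.

Lemma proj_closed_trace L (G Q : {set 'I_n}) :
  (forall j, j \in G -> proj_closed L (fun S => j \in S)) -> Q \subset G ->
  proj_closed L (fun S => S :&: G == Q).
Proof.
move=> clG QG.
have clQ : proj_closed L (fun S => all (fun j => (j \in S) == (j \in Q)) (enum G)).
  by apply: proj_closed_all => j; rewrite mem_enum => /clG /proj_closed_mem_eq.
apply: eq_proj_closed clQ => S.
apply/allP/eqP => [SQ | <- j]; last by rewrite mem_enum inE => ->; rewrite andbT.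
apply/setP => x; rewrite inE; case: (boolP (x \in G)) => xG.
  by rewrite andbT; apply/eqP/SQ; rewrite mem_enum.
by rewrite andbF; apply/esym/negbTE; apply: contra xG; apply: (subsetP QG).
Qed.

Lemma proj_closed_restrict L (G : {set 'I_n}) (P : pred {set 'I_n}) :
  (forall j, j \in G -> proj_closed L (fun S => j \in S)) ->
  proj_closed L (fun S => P (S :&: G)).
Proof.
move=> clG m mL.
have -> : coord_proj (fun S => P (S :&: G)) m =
          \sum_(Q : {set 'I_n} | (Q \subset G) && P Q) coord_proj (fun S => S :&: G == Q) m.
  apply/ffunP => S; rewrite ffunE sum_ffunE.
  under eq_bigr do rewrite ffunE eq_sym.
  rewrite -big_mkcondr /=; case: (boolP (P (S :&: G))) => PSG.
    rewrite (big_pred1 (S :&: G)) // => Q /=.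
    by rewrite andbC; case: eqP => // ->; rewrite subsetIr.
  rewrite big_pred0 // => Q.
  by rewrite andbC; case: eqP => // ->; rewrite (negbTE PSG) andbF.
by rewrite rpred_sum // => Q /andP [QG _]; apply: proj_closed_trace.
Qed.

End CoordProjection.

Section SlowShift.
Variables (F : fieldType) (n : nat).
Local Notation E := (ext F n).
Implicit Types (i j : 'I_n) (U : {set 'I_n}) (m y : E) (L : {vspace E}).

Lemma wedge_ev_out j y U : j \notin U -> wedge (ev j) y U = 0.
Proof.
move=> jU; apply: wedge_eS_eq0 => T _.
by apply: contraNneq jU => <-; rewrite !inE eqxx.
Qed.

Lemma xpart_add_wedge_ypart_eq0 i j m U : i != j -> j \in U ->
  (xpart j m + wedge (ev i) (ypart j m)) U = 0.
Proof.
move=> ij jU; rewrite !ffunE jU add0r; apply: wedge_eS_eq0 => T.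
rewrite ffunE; case: ifP => [_|jT _]; first by rewrite eqxx.
by apply: contraTneq jU => <-; rewrite !inE jT orbF eq_sym.
Qed.

Lemma coord_proj_slow_shift i j m : i != j ->
  let w := slow_shift j i m in
  coord_proj (fun S => j \in S) w = 0 \/ coord_proj (fun S => j \in S) w = w.
Proof.
move=> ij /=; rewrite /slow_shift; case: ifP => _; [left | right];
  apply/ffunP => U; rewrite [LHS]ffunE; case: ifP => jU //.
- by rewrite xpart_add_wedge_ypart_eq0 // ffunE.
- by rewrite ffunE.
- by rewrite wedge_ev_out ?jU.
Qed.

Lemma proj_closed_shift L i j :
  i != j -> shift_stable j i L -> proj_closed L (fun S => j \in S).
Proof.
move=> ij stL m mL; have [s [sL ms]] := (stL m).2 mL.
apply: proj_closed_span ms => _ /mapP [m' m's ->].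
have m'L : slow_shift j i m' \in L.
  by apply/stL; exists [:: m']; rewrite /= andbT (allP sL) // memv_span1.
by case: (coord_proj_slow_shift m' ij) => ->; rewrite ?rpred0.
Qed.

End SlowShift.

Section Wedge12.
Variables (F : fieldType) (n : nat) (i1 i2 : 'I_n).
Hypothesis i12 : i1 != i2.
Local Notation E := (ext F n).
Local Notation e12 := (wedge (ev i1) (ev i2)).
Implicit Types (S U : {set 'I_n}) (x : E).

Let c12 : F := wsign [set i1] [set i2].

Lemma c12_neq0 : c12 != 0.
Proof. by rewrite wsign_neq0 // disjoints1 inE. Qed.

Lemma wedge_ev_ev : e12 = c12 *: (eS [set i1; i2] : E).
Proof. exact: wedge_eS_eS. Qed.

Lemma disjoint_pair S : i1 \notin S -> i2 \notin S -> [disjoint [set i1; i2] & S].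
Proof.
by move=> i1S i2S; rewrite disjoints_subset subUset !sub1set !inE i1S i2S.
Qed.

Lemma coord_eq0_of_wedge_ev2 x S :
  wedge e12 x = 0 -> i1 \notin S -> i2 \notin S -> x S = 0.
Proof.
move=> e12x i1S i2S; have dS := disjoint_pair i1S i2S.
have /eqP := congr1 (fun f : E => f ([set i1; i2] :|: S)) e12x.
rewrite /= wedge_ev_ev wedgeZl ffunE (wedge_eS_setU _ dS) ffunE scale_regularE.
by rewrite !mulf_eq0 (negbTE c12_neq0) (negbTE (wsign_neq0 _ dS)) => /eqP.
Qed.

Lemma eS_mem_of_wedge_ev2 (L : {vspace E}) k U :
  (forall y, y \in extk F n (k - 2) -> wedge e12 y \in L) ->
  i1 \in U -> i2 \in U -> #|U| = k -> eS U \in L.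
Proof.
move=> e12L i1U i2U cardU; set A := [set i1; i2].
have AU : A \subset U by rewrite subUset !sub1set i1U i2U.
have dA : [disjoint A & U :\: A] by rewrite disjoint_sym disjoints_subset setDE subsetIr.
have /e12L : eS (U :\: A) \in extk F n (k - 2).
  apply/mem_span_eS => S; rewrite eSE; case: (S =P U :\: A) => // -> /negP [].
  by rewrite cardsD (setIidPr AU) cardU cards2 i12 eqxx.
have eU : A :|: U :\: A = U by rewrite -{1}(setIidPr AU) setID.
rewrite wedge_ev_ev wedgeZl wedge_eS_eS scalerA -/A eU.
move/(rpredZ (c12 * wsign A (U :\: A))^-1).
by rewrite scalerA mulVf ?scale1r // mulf_neq0 ?c12_neq0 ?(wsign_neq0 _ dA).
Qed.

End Wedge12.

Section Grading.
Variables (F : fieldType) (n : nat).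
Local Notation E := (ext F n).
Implicit Types (S U : {set 'I_n}) (v : E) (L : {vspace E}).

Lemma card_supp_extk k v S : v \in extk F n k -> v S != 0 -> #|S| = k.
Proof. by move=> /mem_span_eS vk vS; apply/eqP; apply: contraNT vS => /vk ->. Qed.

Lemma mem_extk_without j k v : v \in extk F n k ->
  (forall S, v S != 0 -> j \notin S) -> v \in extk_without F j k.
Proof.
move=> vk vj; apply/mem_span_eS => S; apply: contraNeq => vS.
by rewrite (card_supp_extk vk vS) eqxx vj.
Qed.

Lemma ypart_mem_extk_without j k v :
  v \in extk F n k.+1 -> ypart j v \in extk_without F j k.
Proof.
move=> vk; apply/mem_span_eS => S; rewrite ffunE; case: ifP => //= jS.
have [->|vjS] := eqVneq (v (j |: S)) 0; first by rewrite mulr0.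
by have := card_supp_extk vk vjS; rewrite cardsU1 jS add1n => -[->]; rewrite eqxx.
Qed.

Lemma wedge_ev_ypart j v : (forall S, v S != 0 -> j \in S) ->
  wedge (ev j) (ypart j v) = v.
Proof.
move=> vj; apply/ffunP => U; case: (boolP (j \in U)) => jU; last first.
  by rewrite wedge_ev_out //; apply/esym/eqP; apply: contraNT jU => /vj.
have dj : [disjoint [set j] & U :\ j] by rewrite disjoints1 setD11.
rewrite -{1}(setD1K jU) (wedge_eS_setU _ dj) ffunE setD11 wedge_eS_eS ffunE eSE.
by rewrite (setD1K jU) eqxx scale_regularE mulr1 mulrA -expr2 wsign_sqr ?mul1r.
Qed.

Lemma extk_split j k b v : (0 < k)%N -> v \in extk F n k ->
  (forall S, v S != 0 -> (j \in S) = b) ->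
  v \in extk_without F j k \/
  exists y, y \in extk_without F j (k - 1) /\ v = wedge (ev j) y.
Proof.
move=> k_gt0 vk vj; case: b vj => vj; last first.
  by left; apply: mem_extk_without => // S /vj ->.
right; exists (ypart j v); rewrite wedge_ev_ypart => [|S /vj ->] //; split=> //.
by apply: ypart_mem_extk_without; rewrite subn1 prednK.
Qed.

End Grading.

Section ThirdIndex.
Variables (F : fieldType) (n k : nat) (L : {vspace ext F n}) (i1 i2 i3 : 'I_n).
Hypotheses (uniq_i123 : uniq [:: i1; i2; i3]) (Lk : (L <= extk F n k)%VS).
Hypothesis e12L :
  forall y, y \in extk F n (k - 2) -> wedge (wedge (ev i1) (ev i2)) y \in L.
Hypothesis e12_ann :
  forall x, x \in L -> wedge (wedge (ev i1) (ev i2)) x = 0.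
Implicit Types (S : {set 'I_n}).

Lemma card_setI_triple S :
  #|S :&: [set i1; i2; i3]| = ((i1 \in S) + (i2 \in S) + (i3 \in S))%N.
Proof.
have eS3 : S :&: [set i1; i2; i3] =i [seq x <- [:: i1; i2; i3] | x \in S].
  by move=> x; rewrite mem_filter !inE orbA.
rewrite (eq_card eS3).
by rewrite (card_uniqP (filter_uniq _ uniq_i123)) size_filter /= addn0 addnA.
Qed.

Lemma proj_closed_third :
  (forall j, j \notin [set i1; i2; i3] -> proj_closed L (fun S => j \in S)) ->
  proj_closed L (fun S => i3 \in S).
Proof.
move=> clG; set G := ~: [set i1; i2; i3].
have i12 : i1 != i2 by move: uniq_i123; rewrite /= !inE negb_or -andbA => /andP [].
apply: (@eq_proj_closed _ _ _ (fun S => ~~ (i3 \notin S))) => [S|]; first by rewrite negbK.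
apply: proj_closedC => m mL.
(* A coordinate S of m has k elements and meets {i1, i2}, so i3 \notin S holds
   iff either i1, i2 \in S and i3 \notin S, or S has at least k - 1 elements
   in G. *)
have -> : coord_proj (fun S => i3 \notin S) m =
   coord_proj (fun S => [&& i1 \in S, i2 \in S & i3 \notin S]) m +
   coord_proj (fun S => (k - 1 <= #|S :&: G|)%N) m.
  apply/ffunP => S; rewrite !ffunE.
  have [->|mS] := eqVneq (m S) 0; first by rewrite !if_same addr0.
  have i12S : (i1 \in S) || (i2 \in S).
    apply: contraNT mS; rewrite negb_or => /andP [i1S i2S].
    by rewrite (coord_eq0_of_wedge_ev2 i12 (e12_ann mL)).
  have := card_supp_extk (subvP Lk _ mL) mS.
  rewrite -(cardsID G S) setDE setCK card_setI_triple.
  move: #|S :&: G| => g.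
  move: i12S; case: (i1 \in S); case: (i2 \in S); case: (i3 \in S) => //= _;
    case: leqP; rewrite ?addr0 ?add0r // => hg cS; exfalso; lia.
apply: rpredD; last first.
  apply: (proj_closed_restrict (fun X => k - 1 <= #|X|)%N) mL => j.
  by rewrite inE; apply: clG.
rewrite (ext_expand (coord_proj _ m)) rpred_sum // => S _; rewrite ffunE.
case: ifP => [/and3P [i1S i2S _]|_]; last by rewrite scale0r rpred0.
have [->|mS] := eqVneq (m S) 0; first by rewrite scale0r rpred0.
by rewrite rpredZ // (eS_mem_of_wedge_ev2 i12 e12L) // (card_supp_extk (subvP Lk _ mL)).
Qed.

End ThirdIndex.

Lemma basis_subseq (K : fieldType) (vT : vectType K) (X : seq vT) :
  exists2 B, {subset B <= X} & basis_of <<X>>%VS B.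
Proof.
elim: X => [|x X [B BX]]; first by exists [::] => //; rewrite span_nil nil_basis.
move=> /[dup] /span_basis spanB /basis_free freeB.
have [xX | xNX] := boolP (x \in <<X>>%VS).
  exists B => [y /BX yX|]; first by rewrite inE yX orbT.
  by rewrite /basis_of span_cons spanB (addv_idPr _) ?freeB ?eqxx // -memvE.
exists (x :: B) => [y|]; first by rewrite !inE => /orP [-> | /BX ->] //; rewrite orbT.
by rewrite /basis_of !span_cons spanB eqxx free_cons spanB xNX.
Qed.

Section HomogeneousBasis.
Variables (F : fieldType) (n : nat) (L : {vspace ext F n}) (G : {set 'I_n}).
Hypothesis clG : forall j, j \in G -> proj_closed L (fun S => j \in S).

Lemma homogeneous_basis :
  exists2 B, basis_of L B &
    forall b, b \in B -> exists Q, forall S, b S != 0 -> S :&: G = Q.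
Proof.
pose trace_proj (Q : {set 'I_n}) : ext F n -> ext F n :=
  coord_proj (fun S => S :&: G == Q).
have clQ Q : proj_closed L (fun S => S :&: G == Q).
  exact: proj_closed_restrict (pred1 Q) clG.
pose X := [seq trace_proj Q b | Q <- enum {set 'I_n}, b <- vbasis L].
have spanX : <<X>>%VS = L.
  apply/eqP; rewrite eqEsubv; apply/andP; split.
    by apply/span_subvP => _ /allpairsP [[Q b] [_ bL ->]]; apply/clQ/(vbasis_mem bL).
  rewrite -{1}(span_basis (vbasisP L)); apply/span_subvP => b bL.
  have -> : b = \sum_Q trace_proj Q b.
    apply/ffunP => S; rewrite sum_ffunE (bigD1 (S :&: G)) //= big1 => [|Q QS].
      by rewrite ffunE eqxx addr0.
    by rewrite ffunE eq_sym (negbTE QS).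
  by rewrite rpred_sum // => Q _; apply/memv_span/allpairsP; exists (Q, b); rewrite mem_enum.
have [B BX basisB] := basis_subseq X; exists B; first by rewrite -spanX.
move=> b /BX /allpairsP [[Q b0] [_ _ ->]]; exists Q => S.
by rewrite /= ffunE; case: (S :&: G =P Q) => // _; rewrite eqxx.
Qed.

End HomogeneousBasis.

Unset Implicit Arguments.

Theorem corollary3p15 (F : fieldType) (hF : (2%:R : F) != 0)
    (n : nat) (i1 i2 : 'I_n) (hi1 : val i1 = 0%N) (hi2 : val i2 = 1%N)
    (k : nat) (hk : (2 <= k)%N) (L : {vspace ext F n})
    (hLk : (L <= extk F n k)%VS)
    (hsub : forall y, y \in extk F n (k - 2) ->
              wedge (wedge (ev i1) (ev i2)) y \in L)
    (hann : forall x, x \in L -> wedge (wedge (ev i1) (ev i2)) x = 0)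
    (hstab : forall i j : 'I_n, (2 <= i)%N -> (2 <= j)%N -> (i < j)%N ->
              shift_stable j i L) :
  exists B : seq (ext F n),
    basis_of L B /\
    forall b, b \in B -> forall j : 'I_n, (2 <= j)%N ->
      b \in extk_without F j k \/
      exists y, y \in extk_without F j (k - 1) /\ b = wedge (ev j) y.
Proof.
have cl_gt2 (j : 'I_n) : (2 < j)%N -> proj_closed L (fun S => j \in S).
  move=> j_gt2; pose i := Ordinal (ltn_trans j_gt2 (ltn_ord j)).
  apply: (proj_closed_shift (i := i)); first by rewrite -val_eqE /= neq_ltn j_gt2.
  by apply: hstab; rewrite //= ltnW.
have clG (j : 'I_n) :
    j \in [set j : 'I_n | 2 <= j]%N -> proj_closed L (fun S => j \in S).
  rewrite inE leq_eqVlt => /orP [/eqP j2 | /cl_gt2 //].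
  apply: (proj_closed_third (i1 := i1) (i2 := i2)) hLk hsub hann _ => [|j'].
    by rewrite /= !inE -!val_eqE /= hi1 hi2 -j2.
  rewrite !inE -!val_eqE /= hi1 hi2 -j2 => /norP [/norP [? ?] ?].
  by apply: cl_gt2; lia.
have [B basisB homB] := homogeneous_basis clG.
exists B; split => // b bB j j_ge2; have [Q bQ] := homB b bB.
apply: (extk_split (b := j \in Q)) => [||S /bQ <-]; first lia.
  exact: subvP hLk _ (basis_mem basisB bB).
by rewrite !inE j_ge2 andbT.
Qed.
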